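(* Let $p,q$ be consecutive patterns of length 4 satisfying the standing assumptions below, and let $\epsilon\in I_n$ with $T:=\operatorname{Em}(p,\epsilon)$. Consider the following iterative procedure: (a) compute $T=\operatorname{Em}(p,\epsilon)$; (b) change all occurrences of $p$ at positions in $T$ to $q$, and call the resulting sequence $\epsilon'$; (c) let $S=\operatorname{Em}(q,\epsilon')$ and change all occurrences of $q$ at positions in $S\setminus T$ to $p$, calling the result again $\epsilon'$; (d) repeat step (c) until $S\setminus T=\emptyset$, so that $\epsilon'$ has $q$ occurring exactly at the positions in $T$. Then the output $\epsilon'$ of this procedure equals $\phi_{=T}(\epsilon)$, where $\phi_{=T}$ is the recursively defined bijection described below.
   Context: An inversion sequence of length $n$ is an integer sequence $\epsilon_1\cdots\epsilon_n$ with $0\le\epsilon_i<i$; $I_n$ is the set of them. The reduction of an integer word replaces each occurrence of its $k$-th smallest distinct value by $k-1$. A consecutive pattern $p=\underline{p_1p_2p_3p_4}$ occurs in $\epsilon$ at position $i$ if the reduction of $\epsilon_i\cdots\epsilon_{i+3}$ is $p_1p_2p_3p_4$; $\operatorname{Em}(p,\epsilon)$ is the set of such $i$. A pattern is non-overlapping if no two of its occurrences in any sequence overlap in more than one entry. Standing assumptions: $p$ and $q$ are each non-overlapping, agree in their first entries and in their last entries, have the same maximum entry $d$, and each contains every value in $\{0,\dots,d\}$. Change operation: if $p$ occurs at $i$, let $f$ be the order-preserving bijection from $\{0,\dots,d\}$ onto the set of values $\{\epsilon_i,\dots,\epsilon_{i+3}\}$ (so $\epsilon_{i+j-1}=f(p_j)$);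 changing the occurrence to $q$ replaces $\epsilon_{i+j-1}$ by $f(q_j)$, $j=1,\dots,4$ (symmetrically from $q$ to $p$). It is assumed such changes on inversion sequences always yield inversion sequences. Let $I_{n,p}(\supseteq T)=\{\epsilon\in I_n:\operatorname{Em}(p,\epsilon)\supseteq T\}$, $I_{n,p}(=T)=\{\epsilon\in I_n:\operatorname{Em}(p,\epsilon)=T\}$, and similarly for $q$. $\phi_{\ge T}:I_{n,p}(\supseteq T)\to I_{n,q}(\supseteq T)$ changes the occurrences of $p$ at all positions of $T$ to $q$; it is assumed to be a bijection, with inverse $\phi^{-1}_{\ge T}$ changing the occurrences of $q$ at positions of $T$ to $p$. The maps $\phi_{=T}:I_{n,p}(=T)\to I_{n,q}(=T)$ and $\psi_{=T}=\phi_{=T}^{-1}$ are defined by mutual recursion: to compute $\phi_{=T}(\epsilon)$, set $\eta:=\phi_{\ge T}(\epsilon)$; then repeatedly let $S:=\operatorname{Em}(q,\eta)$; if $S=T$ output $\eta$, otherwise (then $S\supsetneq T$) replace $\eta$ by $\phi_{\ge T}(\psi_{=S}(\eta))$ and repeat. To compute $\psi_{=T}(\eta)$, set $\epsilon:=\phi^{-1}_{\ge T}(\eta)$; then repeatedly let $R:=\operatorname{Em}(p,\epsilon)$; if $R=T$ output $\epsilon$, otherwise replace $\epsilon$ by $\phi^{-1}_{\ge T}(\phi_{=R}(\epsilon))$ and repeat. *)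

From mathcomp Require Import all_boot.
From mathcomp Require Import finmap.

Set Implicit Arguments.
Unset Strict Implicit.
Unset Printing Implicit Defensive.

Local Open Scope fset_scope.

(* Sequences are [seq nat]; entries and positions are 1-indexed as in the
   paper: eps_k is [nth 0 eps k.-1]. *)

Definition invseq (n : nat) (e : seq nat) : bool :=
  (size e == n) && all (fun k => nth 0 e k.-1 < k) (iota 1 n).

Definition vals (w : seq nat) : seq nat := sort leq (undup w).

Definition red (w : seq nat) : seq nat := [seq index x (vals w) | x <- w].

Definition window (e : seq nat) (i : nat) : seq nat := take 4 (drop i.-1 e).

Definition occurs (r e : seq nat) (i : nat) : bool :=
  [&& 1 <= i, i + 3 <= size e & red (window e i) == r].

Definition Em (r e : seq nat) : {fset nat} :=
  [fset i | i in [seq i <- iota 1 (size e) | occurs r e i]].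

Definition non_overlapping (r : seq nat) : Prop :=
  forall (w : seq nat) (i j : nat),
    occurs r w i -> occurs r w j -> i < j -> i + 3 <= j.

(* f(j) for the window at position i: order-preserving bijection from
   {0..d} onto the set of values of the window *)
Definition fwin (e : seq nat) (i j : nat) : nat := nth 0 (vals (window e i)) j.

(* change the occurrences at all positions of T to the pattern r
   (simultaneously): entry k in the window of a position i in T
   (the least such i) becomes f_i(r_(k-i+1)). *)
Definition chg (r : seq nat) (T : {fset nat}) (e : seq nat) : seq nat :=
  mkseq (fun k0 =>
    let k := k0.+1 in
    match [seq i <- sort leq (enum_fset T) | (i <= k) && (k <= i + 3)] with
    | i :: _ => fwin e i (nth 0 r (k - i))
    | [::] => nth 0 e k0
    end) (size e).

Section Maps.
Variables p q : seq nat.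

(* phi_{>=T} e = chg q T e, its inverse is chg p T.  The mutually recursive
   maps phi_{=T}, psi_{=T} (with their inner "repeat" loops), with fuel k:
   [None] means "fuel exhausted". *)
Fixpoint phiEq (k : nat) (T : {fset nat}) (e : seq nat) : option (seq nat) :=
  match k with
  | 0 => None
  | k'.+1 => phiLoop k' T (chg q T e)
  end
with phiLoop (k : nat) (T : {fset nat}) (h : seq nat) : option (seq nat) :=
  match k with
  | 0 => None
  | k'.+1 =>
      let S := Em q h in
      if S == T then Some h
      else match psiEq k' S h with
           | Some x => phiLoop k' T (chg q T x)
           | None => None
           end
  end
with psiEq (k : nat) (T : {fset nat}) (h : seq nat) : option (seq nat) :=
  match k with
  | 0 => None
  | k'.+1 => psiLoop k' T (chg p T h)
  end
with psiLoop (k : nat) (T : {fset nat}) (e : seq nat) : option (seq nat) :=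
  match k with
  | 0 => None
  | k'.+1 =>
      let R := Em p e in
      if R == T then Some e
      else match phiEq k' R e with
           | Some x => psiLoop k' T (chg p T x)
           | None => None
           end
  end.

(* steps (c)-(d) of the iterative procedure, with fuel k *)
Fixpoint procLoop (k : nat) (T : {fset nat}) (e' : seq nat) : option (seq nat) :=
  match k with
  | 0 => None
  | k'.+1 =>
      let D := Em q e' `\` T in
      if D == fset0 then Some e' else procLoop k' T (chg p D e')
  end.

Definition procedure (k : nat) (e : seq nat) : option (seq nat) :=
  let T := Em p e in procLoop k T (chg q T e).

End Maps.

(* Fix T = Em(p, e) and h0 = phi_{>=T}(e).  Call a step the change of one
   occurrence of q at a position outside T back to p.  A step only alters the
   two middle entries of the occurrence, through an increasing map, so it moves
   the sequence strictly in the lexicographic direction in which p compares to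
   q; hence steps terminate.  Two different steps commute, because occurrences
   of a non-overlapping pattern share at most an endpoint, which a change leaves
   intact.  So every sequence has a unique normal form, in which q occurs
   exactly at T, and the procedure, which performs steps in batches, computes
   the normal form of h0.

   The recursion computes the same normal form.  By induction on the fuel,
   psi_{=S}(h) is the normal form of phi^{-1}_{>=S}(h) for the reversed steps,
   and changing T to q turns reversed steps into steps; so a round
   h -> phi_{>=T}(psi_{=S}(h)) of the loop keeps the normal form.  The loop
   terminates since the round map is injective and never returns to h0, and
   I_n is finite; the inner calls terminate by induction on n - |T|. *)

From mathcomp Require Import all_boot.
From mathcomp Require Import finmap.
From mathcomp Require Import zify.
Local Open Scope fset_scope.
Set Implicit Arguments.
Unset Strict Implicit.
Unset Printing Implicit Defensive.

(** * Occurrences and changes *)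

Lemma mem_Em r e i : (i \in Em r e) = occurs r e i.
Proof.
rewrite /Em in_fset /= mem_filter mem_iota.
case Ho: (occurs r e i) => //=; case/and3P: Ho => i_gt0 le_ie _.
by rewrite i_gt0 add1n ltnS (leq_trans (leq_addr 3 i)).
Qed.

Lemma occurs_pos r e i : occurs r e i -> 0 < i.
Proof. by case/and3P. Qed.

Lemma occurs_size r e i : occurs r e i -> i + 3 <= size e.
Proof. by case/and3P. Qed.

Lemma card_Em r e : #|` Em r e| <= size e.
Proof.
rewrite /Em card_fseq (leq_trans (size_undup _)) //.
by rewrite size_filter (leq_trans (count_size _ _)) // size_iota.
Qed.

Lemma size_window e i : 0 < i -> i + 3 <= size e -> size (window e i) = 4.
Proof. by case: i => // i _; rewrite /window size_take size_drop /minn; case: ltnP; lia. Qed.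

Lemma nth_window e i m : m < 4 -> nth 0 (window e i) m = nth 0 e (i.-1 + m).
Proof. by move=> lt_m4; rewrite /window nth_take // nth_drop. Qed.

Lemma eq_window e e' i : size e' = size e ->
  (forall m, m < 4 -> nth 0 e' (i.-1 + m) = nth 0 e (i.-1 + m)) ->
  window e' i = window e i.
Proof.
move=> eq_size eq_nth; apply: (@eq_from_nth _ 0).
  by rewrite /window !size_take !size_drop eq_size.
move=> m; rewrite {1}/window size_take => lt_m.
have lt_m4 : m < 4 by move: lt_m; rewrite leq_min; case/andP.
by rewrite !nth_window // eq_nth.
Qed.

Lemma nth_vals_red w m : m < size w -> nth 0 (vals w) (nth 0 (red w) m) = nth 0 w m.
Proof.
move=> lt_m; rewrite /red (nth_map 0) // nth_index //.
by rewrite /vals mem_sort mem_undup mem_nth.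
Qed.

Lemma occurs_lt_vals s e i m : occurs s e i -> m < 4 ->
  nth 0 s m < size (vals (window e i)).
Proof.
case/and3P=> i_gt0 le_ie /eqP <- lt_m4.
have size_w := size_window i_gt0 le_ie.
by rewrite /red (nth_map 0) ?size_w // index_mem /vals mem_sort mem_undup mem_nth ?size_w.
Qed.

Lemma fwin_occurs s e i m : occurs s e i -> m < 4 ->
  fwin e i (nth 0 s m) = nth 0 e (i.-1 + m).
Proof.
move=> occ lt_m4; case/and3P: (occ) => i_gt0 le_ie /eqP <-.
by rewrite /fwin nth_vals_red ?nth_window // size_window.
Qed.

Lemma fwin_homo e i :
  {in [pred x | x < size (vals (window e i))] &, {homo fwin e i : x y / x < y}}.
Proof.
have vals_sorted : sorted ltn (vals (window e i)).
  by rewrite ltn_sorted_uniq_leq sort_uniq undup_uniq (sort_sorted leq_total).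
move=> x y _ lt_y lt_xy.
by apply: (sorted_ltn_nth ltn_trans 0 vals_sorted) => //; rewrite inE (ltn_trans lt_xy).
Qed.

Lemma size_chg r T e : size (chg r T e) = size e.
Proof. by rewrite /chg size_mkseq. Qed.

Lemma chg0 r e : chg r fset0 e = e.
Proof.
apply: (@eq_from_nth _ 0) => [|k]; rewrite size_chg // => lt_k.
by rewrite /chg nth_mkseq //= enum_fset0.
Qed.

Lemma chg1E r e j : 0 < j -> j + 3 <= size e -> size r = 4 ->
  chg r [fset j] e = take j.-1 e ++ map (fwin e j) r ++ drop (j + 3) e.
Proof.
case: j => // j _ le_je size_r /=; apply: (@eq_from_nth _ 0) => [|k].
  by rewrite size_chg !size_cat size_takel ?size_map ?size_drop; lia.
have enum1 : enum_fset [fset j.+1] = [:: j.+1].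
  have : j.+1 \in enum_fset [fset j.+1] by rewrite fset11.
  by have := cardfs1 j.+1; case: (enum_fset _) => [|x [|]] //= _; rewrite inE => /eqP ->.
rewrite size_chg => lt_k; rewrite /chg nth_mkseq //= enum1 /=.
rewrite nth_cat size_takel; last by lia.
case: (ltnP k j) => [lt_kj | le_jk].
  by rewrite ltnS leqNgt lt_kj /= nth_take.
rewrite ltnS le_jk /= nth_cat size_map size_r.
case: (ltnP (k - j) 4) => [lt_k4 | le_4k].
  by rewrite ifT ?(nth_map 0) ?size_r; [congr (fwin _ _ (nth _ _ _)) | |]; lia.
by rewrite ifF ?nth_drop; [congr nth | ]; lia.
Qed.

(** * Lexicographic order *)

Fixpoint lexlt (s t : seq nat) : bool :=
  match s, t with
  | x :: s', y :: t' => (x < y) || (x == y) && lexlt s' t'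
  | _, _ => false
  end.

Lemma lexlt_irr s : lexlt s s = false.
Proof. by elim: s => //= x s ->; rewrite ltnn andbF. Qed.

Lemma lexlt_trans : transitive lexlt.
Proof.
elim=> [|y t IH] [|x s] [|z u] //=.
case/orP=> [lt_xy | /andP[/eqP -> lt_st]]; case/orP=> [lt_yz | /andP[/eqP <- lt_tu]].
- by rewrite (ltn_trans lt_xy lt_yz).
- by rewrite lt_xy.
- by rewrite lt_yz.
- by rewrite eqxx (IH _ _ lt_st lt_tu) orbT.
Qed.

Lemma lexlt_total s t : size s = size t -> s != t -> lexlt s t || lexlt t s.
Proof.
elim: s t => [|x s IH] [|y t] //= [eq_size] neq_st.
case: (ltngtP x y) => //= eq_xy; apply: IH => //.
by apply: contraNneq neq_st => ->; rewrite eq_xy.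
Qed.

Lemma lexlt_catl u s t : lexlt (u ++ s) (u ++ t) = lexlt s t.
Proof. by elim: u => //= x u ->; rewrite ltnn eqxx. Qed.

Lemma lexlt_catr s t w : size s = size t -> lexlt (s ++ w) (t ++ w) = lexlt s t.
Proof.
elim: s t => [|x s IH] [|y t] //= => [_ | [eq_size]]; first exact: lexlt_irr.
by rewrite IH.
Qed.

Lemma lexlt_map (D : pred nat) f s t : {in D &, {homo f : x y / x < y}} ->
  {subset s <= D} -> {subset t <= D} -> lexlt (map f s) (map f t) = lexlt s t.
Proof.
move=> f_homo; elim: s t => [|x s IH] [|y t] //= sD tD.
have [xD yD] := (sD x (mem_head x s), tD y (mem_head y t)).
rewrite IH => [| z zs | z zt]; [| exact/sD/mem_behead | exact/tD/mem_behead].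
case: (ltngtP x y) => [lt_xy | lt_yx | ->]; rewrite ?ltnn ?eqxx //.
- by rewrite f_homo.
- have lt_f := f_homo _ _ yD xD lt_yx.
  by rewrite ltnNge (ltnW lt_f) (gtn_eqF lt_f).
Qed.

Lemma fdisjoint_fset1 (K : choiceType) (A : {fset K}) x :
  x \notin A -> [disjoint A & [fset x]].
Proof. by move=> xNA; apply/fdisjointP => y yA; apply: contraNN xNA => /fset1P <-. Qed.

Section ChangeSites.
Variables r s : seq nat.
Hypothesis s_nonoverlapping : non_overlapping s.
Hypothesis first_rs : nth 0 r 0 = nth 0 s 0.
Hypothesis last_rs : nth 0 r 3 = nth 0 s 3.

Lemma occurs_apart e i j : occurs s e i -> occurs s e j -> i != j ->
  (i + 3 <= j) || (j + 3 <= i).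
Proof.
move=> occ_i occ_j; case: (ltngtP i j) => // lt_ij _.
- by rewrite (s_nonoverlapping occ_i occ_j lt_ij).
- by rewrite (s_nonoverlapping occ_j occ_i lt_ij) orbT.
Qed.

Lemma nth_chg_in T e i k : T `<=` Em s e -> i \in T -> i <= k <= i + 1 ->
  nth 0 (chg r T e) k = fwin e i (nth 0 r (k.+1 - i)).
Proof.
move=> /fsubsetP sub_T iT /andP[le_ik le_ki].
have occ_i : occurs s e i by rewrite -mem_Em sub_T.
have lt_k : k < size e by have := occurs_size occ_i; lia.
rewrite /chg nth_mkseq //=.
set L := [seq _ <- _ | _].
have iL : i \in L by rewrite mem_filter mem_sort iT; lia.
have L_ge : forall y, y \in L -> i <= y.
  move=> y; rewrite mem_filter mem_sort => /andP[/andP[le_yk le_ky] yT].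
  have occ_y : occurs s e y by rewrite -mem_Em sub_T.
  case: (ltnP y i) => // lt_yi.
  by move: (occurs_apart occ_y occ_i); rewrite (ltn_eqF lt_yi) => /(_ isT); lia.
have L_sorted : sorted leq L.
  by apply: (sorted_filter leq_trans); exact: (sort_sorted leq_total).
case: L iL L_sorted L_ge => [|x L] //; rewrite inE => /orP[/eqP <- // | iL] L_sorted L_ge.
have le_xi : x <= i by move/(order_path_min leq_trans)/allP: L_sorted; apply.
by have -> : x = i by apply/eqP; rewrite eqn_leq le_xi L_ge ?mem_head.
Qed.

Lemma nth_chg_out T e k : T `<=` Em s e ->
  (forall i, i \in T -> ~~ (i <= k <= i + 1)) -> nth 0 (chg r T e) k = nth 0 e k.
Proof.
move=> /fsubsetP sub_T out_k.
case: (ltnP k (size e)) => [lt_k | le_ek]; last by rewrite !nth_default ?size_chg.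
rewrite /chg nth_mkseq //=.
case L_eq: [seq _ <- _ | _] => [// | x L].
have : x \in x :: L by rewrite mem_head.
rewrite -L_eq mem_filter mem_sort => /andP[/andP[le_xk le_kx] xT].
have occ_x : occurs s e x by rewrite -mem_Em sub_T.
have x_gt0 := occurs_pos occ_x; have := out_k x xT => not_mid.
have [k_first | k_last] : k.+1 - x = 0 \/ k.+1 - x = 3 by lia.
- by rewrite k_first first_rs fwin_occurs //; congr nth; lia.
- by rewrite k_last last_rs fwin_occurs //; congr nth; lia.
Qed.

Lemma window_chg_notin T e i : T `<=` Em s e -> occurs s e i -> i \notin T ->
  window (chg r T e) i = window e i.
Proof.
move=> sub_T occ_i iNT; apply: eq_window; first exact: size_chg.
move=> m lt_m4; apply: nth_chg_out => // i' i'T.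
have occ_i' : occurs s e i' by rewrite -mem_Em (fsubsetP sub_T).
have neq_ii' : i != i' by apply: contraNneq iNT => ->.
have := occurs_pos occ_i; have := occurs_apart occ_i occ_i' neq_ii'; lia.
Qed.

Lemma Em_chg_disjoint T1 T2 e : T1 `<=` Em s e -> T2 `<=` Em s e ->
  [disjoint T1 & T2] -> T1 `<=` Em s (chg r T2 e).
Proof.
move=> sub_T1 sub_T2 /fdisjointP dis; apply/fsubsetP => i iT1.
have occ_i : occurs s e i by rewrite -mem_Em (fsubsetP sub_T1).
by rewrite mem_Em /occurs window_chg_notin ?size_chg //; last exact: dis.
Qed.

Lemma chgU T1 T2 e : T1 `<=` Em s e -> T2 `<=` Em s e -> [disjoint T1 & T2] ->
  chg r (T1 `|` T2) e = chg r T1 (chg r T2 e).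
Proof.
move=> sub_T1 sub_T2 dis.
have sub_U : T1 `|` T2 `<=` Em s e by rewrite fsubUset sub_T1 sub_T2.
have sub_T1' := Em_chg_disjoint sub_T1 sub_T2 dis.
apply: (@eq_from_nth _ 0) => [|k _]; first by rewrite !size_chg.
have [/hasP[i iT1 mid_i] | /hasPn out1] := boolP (has (fun i => i <= k <= i + 1) T1).
  rewrite (nth_chg_in sub_U _ mid_i) ?in_fsetU ?iT1 // (nth_chg_in sub_T1' iT1 mid_i).
  rewrite /fwin window_chg_notin //; first by rewrite -mem_Em (fsubsetP sub_T1).
  exact: (fdisjointP dis).
have [/hasP[i iT2 mid_i] | /hasPn out2] := boolP (has (fun i => i <= k <= i + 1) T2).
  rewrite (nth_chg_in sub_U _ mid_i) ?in_fsetU ?iT2 ?orbT // (nth_chg_out sub_T1') //.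
  by rewrite (nth_chg_in sub_T2 iT2 mid_i).
rewrite (nth_chg_out sub_U) ?(nth_chg_out sub_T1') ?(nth_chg_out sub_T2) //.
by move=> i; rewrite in_fsetU => /orP[]; [apply: out1 | apply: out2].
Qed.

End ChangeSites.

Lemma chg_id s T e : non_overlapping s -> T `<=` Em s e -> chg s T e = e.
Proof.
move=> s_no sub_T; apply: (@eq_from_nth _ 0) => [|k _]; first by rewrite size_chg.
have [/hasP[i iT mid_i] | /hasPn out] := boolP (has (fun i => i <= k <= i + 1) T).
  have occ_i : occurs s e i by rewrite -mem_Em (fsubsetP sub_T).
  have i_gt0 := occurs_pos occ_i.
  by rewrite (nth_chg_in s_no erefl erefl sub_T iT mid_i) fwin_occurs //; [congr nth | ]; lia.
by rewrite (nth_chg_out erefl erefl sub_T).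
Qed.

Lemma size_occurs s e j : occurs s e j -> size s = 4.
Proof. by case/and3P=> j_gt0 le_je /eqP <-; rewrite size_map size_window. Qed.

Lemma map_fwin_occurs s e j : occurs s e j -> map (fwin e j) s = window e j.
Proof.
move=> occ; have size_s := size_occurs occ.
have j_gt0 := occurs_pos occ; have le_je := occurs_size occ.
apply: (@eq_from_nth _ 0) => [|m]; first by rewrite size_map size_s size_window.
by rewrite size_map size_s => lt_m4; rewrite (nth_map 0) ?size_s // fwin_occurs ?nth_window.
Qed.

Lemma window_cat e j : 0 < j -> e = take j.-1 e ++ window e j ++ drop (j + 3) e.
Proof.
case: j => // j _ /=; have -> : (j.+1 + 3 = 4 + j)%N by rewrite addnC.
by rewrite /window -drop_drop !cat_take_drop.
Qed.

Definition flip_lt (a b : seq nat) : rel (seq nat) :=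
  fun x y => if lexlt a b then lexlt x y else lexlt y x.

Lemma flip_lt_irr a b x : flip_lt a b x x = false.
Proof. by rewrite /flip_lt lexlt_irr; case: ifP. Qed.

Lemma flip_lt_trans a b : transitive (flip_lt a b).
Proof.
rewrite /flip_lt => y x z; case: ifP => _ lt_xy lt_yz; first exact: lexlt_trans lt_yz.
exact: lexlt_trans lt_xy.
Qed.

(* Only the two middle entries of the occurrence change, through the
   increasing map [fwin e j]. *)
Lemma flip_lt_chg1 a b e j : size a = size b -> a != b -> {subset a <= b} ->
  occurs b e j -> flip_lt a b (chg a [fset j] e) e.
Proof.
move=> eq_size neq_ab sub_ab occ; have size_b := size_occurs occ.
have j_gt0 := occurs_pos occ; have le_je := occurs_size occ.
pose D := [pred x | x < size (vals (window e j))].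
have sub_b : {subset b <= D}.
  by move=> x /(nthP 0)[m lt_m <-]; rewrite inE occurs_lt_vals // -size_b.
have sub_a : {subset a <= D} by move=> x /sub_ab; apply: sub_b.
have lex_cat x y : {subset x <= D} -> {subset y <= D} -> size x = size y ->
    lexlt (take j.-1 e ++ map (fwin e j) x ++ drop (j + 3) e)
          (take j.-1 e ++ map (fwin e j) y ++ drop (j + 3) e) = lexlt x y.
  move=> sub_x sub_y eq_xy.
  by rewrite lexlt_catl lexlt_catr ?size_map // (lexlt_map (@fwin_homo e j)).
have e_cat : e = take j.-1 e ++ map (fwin e j) b ++ drop (j + 3) e.
  by rewrite map_fwin_occurs -?window_cat.
rewrite /flip_lt chg1E ?eq_size // {4 5}e_cat !lex_cat //.
by case: ifP => // lt_ba; have := lexlt_total eq_size neq_ab; rewrite lt_ba.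
Qed.

(** * Terminating rewriting with the diamond property *)

Inductive star (X : Type) (R : X -> X -> Prop) : X -> X -> Prop :=
  | star_refl x : star R x x
  | star_step x y z : R x y -> star R y z -> star R x z.

Lemma star_trans X (R : X -> X -> Prop) x y z : star R x y -> star R y z -> star R x z.
Proof. by move=> Rxy; elim: Rxy => // x0 y0 z0 R0 _ IH /IH; apply: star_step R0. Qed.

Lemma star_split X (R : X -> X -> Prop) x z :
  star R x z -> x = z \/ exists2 y, R x y & star R y z.
Proof. by case=> [x0 | x0 y z0 Rxy Ryz]; [left | right; exists y]. Qed.

Lemma star1 X (R : X -> X -> Prop) x y : R x y -> star R x y.
Proof. by move=> Rxy; apply: star_step Rxy _; apply: star_refl. Qed.

Section Diamond.
Variables (X : Type) (R : X -> X -> Prop) (inv : X -> Prop) (mu : X -> nat).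
Hypothesis R_inv : forall x y, inv x -> R x y -> inv y.
Hypothesis R_mu : forall x y, inv x -> R x y -> mu y < mu x.
Hypothesis R_diamond : forall x y1 y2, inv x -> R x y1 -> R x y2 ->
  y1 = y2 \/ exists2 w, R y1 w & R y2 w.
Hypothesis R_dec : forall x, inv x -> (exists y, R x y) \/ (forall y, ~ R x y).

Local Notation "x ->* y" := (star R x y) (at level 70).
Local Notation normal z := (forall y, ~ R z y).

Lemma star_inv x y : inv x -> x ->* y -> inv y.
Proof. by move=> inv_x Rxy; elim: Rxy inv_x => // x0 y0 z0 /R_inv Rxy _ IH /Rxy. Qed.

Lemma star_mu x y : inv x -> x ->* y -> mu y <= mu x.
Proof.
move=> inv_x Rxy; elim: Rxy inv_x => // x0 y0 z0 Rxy _ IH inv_x0.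
exact: leq_trans (IH (R_inv inv_x0 Rxy)) (ltnW (R_mu inv_x0 Rxy)).
Qed.

Lemma normal_form_exists x : inv x -> exists2 z, x ->* z & normal z.
Proof.
elim/ltn_ind: (mu x) {-2}x (erefl (mu x)) => m IH {}x mu_x inv_x.
have [[y Rxy] | nf_x] := R_dec inv_x; last by exists x => //; apply: star_refl.
have [|z Ryz nf_z] := IH (mu y) _ y erefl (R_inv inv_x Rxy); first by rewrite -mu_x R_mu.
by exists z => //; apply: star_step Rxy Ryz.
Qed.

Lemma normal_form_unique x z1 z2 : inv x -> x ->* z1 -> x ->* z2 ->
  normal z1 -> normal z2 -> z1 = z2.
Proof.
elim/ltn_ind: (mu x) {-2}x (erefl (mu x)) z1 z2 => m IH {}x mu_x z1 z2 inv_x.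
move=> Rxz1 Rxz2; case: (star_split Rxz1) => [<- | [y1 Rxy1 Ry1z1]];
  case: (star_split Rxz2) => [<- // | [y2 Rxy2 Ry2z2]] nf_z1 nf_z2.
- by case: (nf_z1 _ Rxy2).
- by case: (nf_z2 _ Rxy1).
have inv_y1 := R_inv inv_x Rxy1; have inv_y2 := R_inv inv_x Rxy2.
have IH1 := IH (mu y1) _ y1 erefl; have IH2 := IH (mu y2) _ y2 erefl.
rewrite -mu_x in IH1 IH2; have {}IH1 := IH1 (R_mu inv_x Rxy1) _ _ inv_y1.
have {}IH2 := IH2 (R_mu inv_x Rxy2) _ _ inv_y2.
case: (R_diamond inv_x Rxy1 Rxy2) => [eq_y | [w Ry1w Ry2w]].
  by apply: IH1 => //; rewrite eq_y.
have [z Rwz nf_z] := normal_form_exists (R_inv inv_y1 Ry1w).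
have Ry1z : y1 ->* z by apply: star_step Ry1w Rwz.
have Ry2z : y2 ->* z by apply: star_step Ry2w Rwz.
by rewrite (IH1 z1 z Ry1z1 Ry1z nf_z1 nf_z) (IH2 z2 z Ry2z2 Ry2z nf_z2 nf_z).
Qed.

End Diamond.

(** * Changing occurrences of b outside T back to a *)

Fixpoint bounded_seqs (m b : nat) : seq (seq nat) :=
  if m is m'.+1 then [seq x :: s | x <- iota 0 b, s <- bounded_seqs m' b] else [:: [::]].

Lemma bounded_seqsP m b s : size s = m -> all (gtn b) s -> s \in bounded_seqs m b.
Proof.
elim: m s => [|m IH] [|x s] //= [size_s] /andP[lt_xb lt_sb].
by apply: (allpairs_f (fun x s => x :: s)); rewrite ?mem_iota ?IH.
Qed.

Lemma invseq_size n e : invseq n e -> size e = n.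
Proof. by case/andP=> /eqP. Qed.

Lemma invseq_bounded n e : invseq n e -> e \in bounded_seqs n n.
Proof.
case/andP=> /eqP size_e /(all_nthP 0) lt_e; apply: bounded_seqsP => //.
apply/(all_nthP 0) => k lt_k; move: (lt_e k); rewrite size_iota -size_e => /(_ lt_k).
by rewrite nth_iota // add1n /=; lia.
Qed.

Lemma count_lt_trans (T : eqType) (lt : rel T) (F : seq T) x y :
  transitive lt -> irreflexive lt -> x \in F -> lt x y ->
  count (lt^~ x) F < count (lt^~ y) F.
Proof.
move=> lt_trans lt_irr xF lt_xy.
have sub_xy z : lt z x -> lt z y by move/lt_trans; apply.
elim: F xF => //= z F IH; rewrite inE => /orP[/eqP <- | /IH lt_F].
  by rewrite lt_irr lt_xy add0n add1n ltnS; apply: sub_count => w /sub_xy.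
rewrite -addnS leq_add //.
by case lt_zx: (lt z x); rewrite // (sub_xy z).
Qed.

(* The standing assumptions on (p, q) with p != q, symmetric in the two
   patterns; [exch_chgab] and [exch_chgba] express that phi_{>=T} is a
   bijection with inverse phi^{-1}_{>=T}. *)
Record exchangeable (a b : seq nat) : Prop := Exchangeable {
  exch_size : size a = size b;
  exch_neq : a != b;
  exch_noa : non_overlapping a;
  exch_nob : non_overlapping b;
  exch_first : nth 0 a 0 = nth 0 b 0;
  exch_last : nth 0 a 3 = nth 0 b 3;
  exch_subab : {subset a <= b};
  exch_subba : {subset b <= a};
  exch_chgab : forall n T e, invseq n e -> T `<=` Em a e ->
    [/\ invseq n (chg b T e), T `<=` Em b (chg b T e) & chg a T (chg b T e) = e];
  exch_chgba : forall n T e, invseq n e -> T `<=` Em b e ->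
    [/\ invseq n (chg a T e), T `<=` Em a (chg a T e) & chg b T (chg a T e) = e]
}.

Lemma exchangeable_sym a b : exchangeable a b -> exchangeable b a.
Proof.
case=> size_ab neq_ab noa nob first last subab subba chgab chgba.
by split; rewrite // 1?eq_sym.
Qed.

(* Step (c) of the procedure, one position at a time. *)
Definition revert_step (a b : seq nat) (T : {fset nat}) (z z' : seq nat) : Prop :=
  exists2 j, j \in Em b z `\` T & z' = chg a [fset j] z.

Definition revert_inv (b : seq nat) (n : nat) (T : {fset nat}) (z : seq nat) : Prop :=
  invseq n z /\ T `<=` Em b z.

Definition revert_measure (a b : seq nat) (n : nat) (z : seq nat) : nat :=
  count (flip_lt a b ^~ z) (bounded_seqs n n).

Definition revert_nf (a b : seq nat) (T : {fset nat}) (z w : seq nat) : Prop :=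
  star (revert_step a b T) z w /\ Em b w = T.

Section Revert.
Variables (a b : seq nat) (n : nat).
Hypothesis ab : exchangeable a b.

Let nob := exch_nob ab.
Let first_ab := exch_first ab.
Let last_ab := exch_last ab.

Local Notation step := (revert_step a b).
Local Notation inv := (revert_inv b n).
Local Notation measure := (revert_measure a b n).

Lemma revert_step_inv T z y : inv T z -> step T z y -> inv T y.
Proof.
case=> inv_z sub_T [j]; rewrite in_fsetD => /andP[jNT jz] ->.
have sub_j : [fset j] `<=` Em b z by rewrite fsub1set.
have [inv_y _ _] := exch_chgba ab inv_z sub_j; split => //.
by apply: (Em_chg_disjoint nob first_ab last_ab sub_T sub_j); apply: fdisjoint_fset1.
Qed.

Lemma revert_step_measure T z y : inv T z -> step T z y -> measure y < measure z.
Proof.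
case=> inv_z _ [j]; rewrite in_fsetD => /andP[_ jz] ->.
have sub_j : [fset j] `<=` Em b z by rewrite fsub1set.
have [inv_y _ _] := exch_chgba ab inv_z sub_j.
apply: count_lt_trans; [exact: flip_lt_trans | exact: flip_lt_irr | |].
  exact: invseq_bounded inv_y.
by apply: (flip_lt_chg1 (exch_size ab) (exch_neq ab) (exch_subab ab)); rewrite -mem_Em.
Qed.

Lemma revert_step_diamond T z y1 y2 : inv T z -> step T z y1 -> step T z y2 ->
  y1 = y2 \/ exists2 w, step T y1 w & step T y2 w.
Proof.
case=> inv_z sub_T [j]; rewrite in_fsetD => /andP[jNT jz] ->.
case=> k; rewrite in_fsetD => /andP[kNT kz] ->.
have [<- | neq_jk] := eqVneq j k; [by left | right].
have sub_j : [fset j] `<=` Em b z by rewrite fsub1set.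
have sub_k : [fset k] `<=` Em b z by rewrite fsub1set.
have dis_jk : [disjoint [fset j] & [fset k]] by apply: fdisjoint_fset1; rewrite inE eq_sym.
have dis_kj : [disjoint [fset k] & [fset j]] by rewrite fdisjoint_sym.
have chgU_jk := chgU nob first_ab last_ab sub_j sub_k dis_jk.
have chgU_kj := chgU nob first_ab last_ab sub_k sub_j dis_kj.
exists (chg a [fset j; k] z).
- exists k; last by rewrite -chgU_kj fsetUC.
  rewrite in_fsetD kNT -fsub1set.
  by apply: (Em_chg_disjoint nob first_ab last_ab sub_k sub_j dis_kj).
- exists j; last by rewrite -chgU_jk.
  rewrite in_fsetD jNT -fsub1set.
  by apply: (Em_chg_disjoint nob first_ab last_ab sub_j sub_k dis_jk).
Qed.

Lemma revert_step_dec T z : (exists y, step T z y) \/ (forall y, ~ step T z y).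
Proof.
have [/eqP no_site | /fset0Pn[j jD]] := boolP (Em b z `\` T == fset0).
  by right=> y [j]; rewrite no_site.
by left; exists (chg a [fset j] z), j.
Qed.

Lemma revert_normalP T z : T `<=` Em b z ->
  (forall y, ~ step T z y) <-> Em b z = T.
Proof.
move=> sub_T; split=> [nf_z | eq_T y [j]]; last by rewrite eq_T fsetDv.
apply/eqP; rewrite eqEfsubset sub_T andbT -fsetD_eq0.
by apply/negPn/negP => /fset0Pn[j jD]; apply: (nf_z (chg a [fset j] z)); exists j.
Qed.

Lemma revert_star_inv T z w : inv T z -> star (step T) z w -> inv T w.
Proof. by move=> inv_z zw; apply: (star_inv (@revert_step_inv T) inv_z zw). Qed.

Lemma revert_nf_exists T z : inv T z -> exists w, revert_nf a b T z w.
Proof.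
move=> inv_z; have [w zw nf_w] := normal_form_exists (@revert_step_inv T)
  (@revert_step_measure T) (fun x _ => revert_step_dec T x) inv_z.
by exists w; split=> //; apply/(revert_normalP (revert_star_inv inv_z zw).2).
Qed.

Lemma revert_nf_unique T z w1 w2 : inv T z ->
  revert_nf a b T z w1 -> revert_nf a b T z w2 -> w1 = w2.
Proof.
move=> inv_z [zw1 nf_w1] [zw2 nf_w2].
apply: (normal_form_unique (@revert_step_inv T) (@revert_step_measure T)
  (@revert_step_diamond T) (fun x _ => revert_step_dec T x) inv_z zw1 zw2).
- by apply/(revert_normalP (revert_star_inv inv_z zw1).2).
- by apply/(revert_normalP (revert_star_inv inv_z zw2).2).
Qed.

Lemma revert_steps_plus T D z : inv T z -> D `<=` Em b z `\` T -> D != fset0 ->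
  exists2 y, step T z y & star (step T) y (chg a D z).
Proof.
elim/ltn_ind: #|`D| {-2}D (erefl #|`D|) z => m IH {}D card_D z inv_z.
case/fsubsetDP=> sub_D dis_DT /fset0Pn[j jD].
have jz : j \in Em b z `\` T by rewrite in_fsetD (fsubsetP sub_D) ?(fdisjointP dis_DT).
pose D' := D `\ j.
have sub_j : [fset j] `<=` Em b z by rewrite fsub1set (fsubsetP sub_D).
have sub_D' : D' `<=` Em b z := fsubset_trans (fsubsetDl _ _) sub_D.
have dis_D'j : [disjoint D' & [fset j]] by apply: fdisjoint_fset1; rewrite in_fsetD1 eqxx.
have chg_D : chg a D z = chg a D' (chg a [fset j] z).
  by rewrite -(chgU nob first_ab last_ab sub_D' sub_j dis_D'j) fsetUC fsetD1K.
have step_j : step T z (chg a [fset j] z) by exists j.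
exists (chg a [fset j] z) => //; rewrite chg_D.
have [-> | D'_ne0] := eqVneq D' fset0; first by rewrite chg0; apply: star_refl.
have lt_card : #|`D'| < m by rewrite -card_D (cardfsD1 j D) jD.
have sub_D'y : D' `<=` Em b (chg a [fset j] z) `\` T.
  apply/fsubsetDP; split; last exact: fdisjointWl (fsubsetDl _ _) dis_DT.
  by apply: (Em_chg_disjoint nob first_ab last_ab sub_D' sub_j dis_D'j).
have [y step_y y_D] := IH _ lt_card D' erefl _ (revert_step_inv inv_z step_j) sub_D'y D'_ne0.
exact: star_step step_y y_D.
Qed.

Lemma revert_steps T D z : inv T z -> D `<=` Em b z `\` T -> star (step T) z (chg a D z).
Proof.
move=> inv_z sub_D; have [-> | D_ne0] := eqVneq D fset0; first by rewrite chg0; apply: star_refl.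
by have [y zy yD] := revert_steps_plus inv_z sub_D D_ne0; apply: star_step zy yD.
Qed.

Lemma revert_steps_measure T D z : inv T z -> D `<=` Em b z `\` T -> D != fset0 ->
  measure (chg a D z) < measure z.
Proof.
move=> inv_z sub_D D_ne0; have [y zy yD] := revert_steps_plus inv_z sub_D D_ne0.
apply: leq_ltn_trans (revert_step_measure inv_z zy).
exact: (star_mu (@revert_step_inv T) (@revert_step_measure T) (revert_step_inv inv_z zy) yD).
Qed.

End Revert.

Section Transport.
Variables (a b : seq nat) (n : nat).
Hypothesis ab : exchangeable a b.

Let noa := exch_noa ab.
Let first_ba := esym (exch_first ab).
Let last_ba := esym (exch_last ab).

(* [chg b T] commutes with the change at [j], which lies outside [T], and
   [exch_chgab] undoes that change. *)
Lemma revert_step_transport T S y y' : T `<=` S -> invseq n y -> S `<=` Em a y ->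
  revert_step b a S y y' -> revert_step a b T (chg b T y') (chg b T y).
Proof.
move=> sub_TS inv_y sub_S [j]; rewrite in_fsetD => /andP[jNS jy] ->.
have jNT : j \notin T by apply: contraNN jNS; apply: (fsubsetP sub_TS).
have sub_T : T `<=` Em a y := fsubset_trans sub_TS sub_S.
have sub_j : [fset j] `<=` Em a y by rewrite fsub1set.
have dis_Tj := fdisjoint_fset1 jNT.
have dis_jT : [disjoint [fset j] & T] by rewrite fdisjoint_sym.
have chg_Tj : chg b T (chg b [fset j] y) = chg b [fset j] (chg b T y).
  rewrite -(chgU noa first_ba last_ba sub_T sub_j dis_Tj) fsetUC.
  exact: (chgU noa first_ba last_ba sub_j sub_T dis_jT).
have [inv_v _ _] := exch_chgab ab inv_y sub_T.
have sub_jv : [fset j] `<=` Em a (chg b T y).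
  by apply: (Em_chg_disjoint noa first_ba last_ba sub_j sub_T dis_jT).
have [_ sub_j' chg_jK] := exch_chgab ab inv_v sub_jv.
by rewrite chg_Tj; exists j; rewrite // in_fsetD jNT -fsub1set.
Qed.

Lemma revert_star_transport T S y x : T `<=` S -> revert_inv a n S y ->
  star (revert_step b a S) y x -> star (revert_step a b T) (chg b T x) (chg b T y).
Proof.
move=> sub_TS inv_y yx; elim: yx inv_y => [y0 | y0 y1 x0 step01 _ IH] inv_y0.
  exact: star_refl.
apply: star_trans (IH (revert_step_inv (exchangeable_sym ab) inv_y0 step01)) (star1 _).
by case: inv_y0 => inv_y0 sub_S; apply: revert_step_transport step01.
Qed.

End Transport.

(** * The maps phi_{=T} and psi_{=T} *)

Lemma phiEqS a b k T e : phiEq a b k.+1 T e = phiLoop a b k T (chg b T e).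
Proof. by []. Qed.

Lemma phiLoopS a b k T h : phiLoop a b k.+1 T h =
  if Em b h == T then Some h else
  if psiEq a b k (Em b h) h is Some x then phiLoop a b k T (chg b T x) else None.
Proof. by []. Qed.

Lemma psi_phi_swap k : forall a b,
  psiEq a b k =2 phiEq b a k /\ psiLoop a b k =2 phiLoop b a k.
Proof.
elim: k => [|k IH] a b; first by split.
split=> T e /=; first by rewrite (IH a b).2.
by rewrite (IH b a).1; case: (phiEq a b k _ e) => // x; rewrite (IH a b).2.
Qed.

Lemma psiEq_phiEq a b k : psiEq a b k =2 phiEq b a k.
Proof. exact: (psi_phi_swap k a b).1. Qed.

Lemma phi_fuel_succ k : forall a b,
  (forall T e z, phiEq a b k T e = Some z -> phiEq a b k.+1 T e = Some z) /\
  (forall T h z, phiLoop a b k T h = Some z -> phiLoop a b k.+1 T h = Some z).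
Proof.
elim: k => [|k IH] a b; first by split.
split=> T e z; first by rewrite !phiEqS; apply: (IH a b).2.
rewrite !phiLoopS !psiEq_phiEq; case: ifP => // _.
case phi_e: (phiEq b a k _ e) => [x|//].
by rewrite ((IH b a).1 _ _ _ phi_e); apply: (IH a b).2.
Qed.

Lemma phiEq_fuel a b k k' T e z : k <= k' ->
  phiEq a b k T e = Some z -> phiEq a b k' T e = Some z.
Proof.
elim: k' => [|k' IH]; first by rewrite leqn0 => /eqP ->.
rewrite leq_eqVlt => /orP[/eqP -> // | /IH phi_k /phi_k].
exact: (phi_fuel_succ k' a b).1.
Qed.

Lemma phiLoop_fuel a b k k' T h z : k <= k' ->
  phiLoop a b k T h = Some z -> phiLoop a b k' T h = Some z.
Proof.
elim: k' => [|k' IH]; first by rewrite leqn0 => /eqP ->.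
rewrite leq_eqVlt => /orP[/eqP -> // | /IH phi_k /phi_k].
exact: (phi_fuel_succ k' a b).2.
Qed.

Lemma revert_inv_chg_Em a b n h : exchangeable a b -> invseq n h ->
  revert_inv a n (Em b h) (chg a (Em b h) h).
Proof. by move=> ab inv_h; have [? ? _] := exch_chgba ab inv_h (fsubset_refl _); split. Qed.

Section LoopBody.
Variables (a b : seq nat) (n : nat) (T : {fset nat}) (h x : seq nat).
Hypothesis ab : exchangeable a b.
Hypothesis inv_h : revert_inv b n T h.
Hypothesis nf_x : revert_nf b a (Em b h) (chg a (Em b h) h) x.

Local Notation S := (Em b h).

Let inv_S := revert_inv_chg_Em ab inv_h.1.

Lemma loop_body_inv : revert_inv b n T (chg b T x).
Proof.
have [inv_x _] := revert_star_inv (exchangeable_sym ab) inv_S nf_x.1.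
have sub_T : T `<=` Em a x by rewrite nf_x.2; case: inv_h.
by have [? ? _] := exch_chgab ab inv_x sub_T; split.
Qed.

(* Both [h] and [chg b T x] reach [chg a (S `\` T) h]. *)
Lemma loop_body_nf z : revert_nf a b T (chg b T x) z -> revert_nf a b T h z.
Proof.
case: inv_h => inv_h' sub_T.
pose u := chg a (S `\` T) h.
have hu : star (revert_step a b T) h u by apply: (revert_steps ab inv_h); rewrite fsetSD.
have inv_u := revert_star_inv ab inv_h hu.
have dis : [disjoint T & S `\` T] by apply/fdisjointP => i iT; rewrite in_fsetD iT.
have chg_S : chg a S h = chg a T u.
  rewrite -{1}(fsetID T S) (fsetIidPr sub_T).
  exact: (chgU (exch_nob ab) (exch_first ab) (exch_last ab) sub_T (fsubsetDl _ _) dis).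
have chg_u : chg b T (chg a S h) = u by rewrite chg_S; case: (exch_chgba ab inv_u.1 inv_u.2).
have xu : star (revert_step a b T) (chg b T x) u.
  by rewrite -chg_u; apply: (revert_star_transport ab sub_T inv_S nf_x.1).
move=> nf_z; have [w [uw nf_w]] := revert_nf_exists ab inv_u.
have -> : z = w.
  by apply: (revert_nf_unique ab loop_body_inv nf_z); split=> //; apply: star_trans xu uw.
by split=> //; apply: star_trans hu uw.
Qed.

End LoopBody.

Lemma phi_sound n k : forall a b, exchangeable a b ->
  (forall T h z, revert_inv b n T h -> phiLoop a b k T h = Some z -> revert_nf a b T h z) /\
  (forall T e z, invseq n e -> T `<=` Em a e -> phiEq a b k T e = Some z ->
     revert_nf a b T (chg b T e) z).
Proof.
elim: k => [|k IH] a b ab; first by split.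
split=> [T h z inv_h | T e z inv_e sub_T]; last first.
  rewrite phiEqS; apply: (IH a b ab).1.
  by have [? ? _] := exch_chgab ab inv_e sub_T; split.
rewrite phiLoopS psiEq_phiEq; case: eqP => [eq_T [<-] | _]; first by split=> //; apply: star_refl.
case phi_h: (phiEq b a k _ h) => [x|//].
have nf_x := (IH b a (exchangeable_sym ab)).2 _ _ _ inv_h.1 (fsubset_refl _) phi_h.
by move/((IH a b ab).1 _ _ _ (loop_body_inv ab inv_h nf_x)); apply: (loop_body_nf ab inv_h nf_x).
Qed.

Lemma revert_nf_chg a b n S h y : exchangeable a b -> invseq n h -> Em b h = S ->
  revert_nf b a S (chg a S h) y -> revert_nf a b S (chg b S y) h.
Proof.
move=> ab inv_h Em_h [hy Em_y]; split=> //.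
have sub_S : S `<=` Em b h by rewrite Em_h.
have inv_S : revert_inv a n S (chg a S h) by rewrite -Em_h; apply: revert_inv_chg_Em.
have [_ _ chg_hK] := exch_chgba ab inv_h sub_S.
by rewrite -[X in star _ _ X]chg_hK; apply: (revert_star_transport ab _ inv_S hy).
Qed.

Section Orbit.
Variables (X : eqType) (F : seq X) (inv P : pred X) (g : X -> X) (x0 : X).
Hypothesis inv_F : {subset inv <= F}.
Hypothesis g_inv : forall x, inv x -> P x -> inv (g x).
Hypothesis g_inj : {in [predI inv & P] &, injective g}.
Hypothesis g_neq_x0 : forall x, inv x -> P x -> g x != x0.
Hypothesis inv_x0 : inv x0.

Lemma iter_inv i : (forall j, j < i -> P (iter j g x0)) -> inv (iter i g x0).
Proof. by elim: i => //= i IH P_i; apply: g_inv; [apply: IH => j /ltnW | ]; apply: P_i. Qed.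

(* The orbit of [x0] cannot stay in [P] for [size F + 1] steps: those iterates
   would be pairwise distinct elements of [F]. *)
Lemma iter_exit : exists i, (forall j, j < i -> P (iter j g x0)) /\ ~~ P (iter i g x0).
Proof.
pose notP i := ~~ P (iter i g x0).
suff [i notP_i] : exists i, notP i.
  have [m notP_m min_m] := ex_minnP (ex_intro notP i notP_i).
  by exists m; split=> // j lt_jm; apply/negPn/negP => /min_m; rewrite leqNgt lt_jm.
have [/hasP[i _ notP_i] | /hasPn all_P] := boolP (has notP (iota 0 (size F).+1)).
  by exists i.
have P_le i : i <= size F -> P (iter i g x0).
  by move=> le_iF; apply/negPn/all_P; rewrite mem_iota.
have inv_le i : i <= size F -> inv (iter i g x0).
  by move=> le_iF; apply: iter_inv => j lt_ji; apply: P_le; lia.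
have invP_le i : i <= size F -> iter i g x0 \in [predI inv & P].
  by move=> le_iF; rewrite inE; apply/andP; split; [apply: inv_le | apply: P_le].
have neq_x0 i : i <= size F -> iter i.+1 g x0 != x0.
  by move/invP_le/andP=> [inv_i P_i]; apply: g_neq_x0.
have iter_inj i j : i <= size F -> j <= size F -> iter i g x0 = iter j g x0 -> i = j.
  elim: i j => [|i IH] [|j] // lt_iF lt_jF.
  - by move=> eq_x0; move: (neq_x0 j (ltnW lt_jF)); rewrite -eq_x0 eqxx.
  - by move=> eq_x0; move: (neq_x0 i (ltnW lt_iF)); rewrite eq_x0 eqxx.
  move/g_inj=> eq_ij; congr S; apply: IH; rewrite ?(ltnW lt_iF) ?(ltnW lt_jF) //.
  by apply: eq_ij; apply: invP_le; apply: ltnW.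
have uniq_orbit : uniq [seq iter i g x0 | i <- iota 0 (size F).+1].
  rewrite map_inj_in_uniq ?iota_uniq // => i j; rewrite !mem_iota !add0n !ltnS.
  exact: iter_inj.
have sub_orbit : {subset [seq iter i g x0 | i <- iota 0 (size F).+1] <= F}.
  by move=> y /mapP[i]; rewrite mem_iota add0n ltnS => /inv_le inv_i ->; apply: inv_F.
by have := uniq_leq_size uniq_orbit sub_orbit; rewrite size_map size_iota ltnn.
Qed.

End Orbit.

Section Termination.
Variables (a b : seq nat) (n : nat) (T : {fset nat}) (x : seq nat).
Hypothesis ab : exchangeable a b.
Hypothesis inv_x : invseq n x.
Hypothesis Em_x : Em a x = T.
Hypothesis psi_total : forall h, invseq n h -> T `<` Em b h ->
  exists K z, phiEq b a K (Em b h) h = Some z.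

Let inv := [pred h | invseq n h && (T `<=` Em b h)].
Let P := [pred h | Em b h != T].

Let psi_defined h : exists K, inv h && P h ==> (phiEq b a K (Em b h) h != None).
Proof.
have [/andP[/andP[inv_h sub_T] P_h] | _] := boolP (inv h && P h); last by exists 0.
have [|K [z phi_h]] := psi_total inv_h; first by rewrite fproperEneq eq_sym sub_T andbT.
by exists K; rewrite phi_h.
Qed.

Let psi h := odflt h (phiEq b a (ex_minn (psi_defined h)) (Em b h) h).
Let g h := chg b T (psi h).

Let psi_fuel h : inv h -> P h ->
  exists K, phiEq b a K (Em b h) h = Some (psi h).
Proof.
move=> inv_h P_h; exists (ex_minn (psi_defined h)); rewrite /psi.
case: ex_minnP => K; rewrite inv_h P_h /= => phi_K _.
by case: phiEq phi_K.
Qed.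

Let psi_nf h : inv h -> P h -> revert_nf b a (Em b h) (chg a (Em b h) h) (psi h).
Proof.
move=> inv_h P_h; have [K phi_h] := psi_fuel inv_h P_h; case/andP: inv_h => inv_h _.
exact: ((phi_sound n K (exchangeable_sym ab)).2 _ _ _ inv_h (fsubset_refl _) phi_h).
Qed.

Let revert_inv_of h : inv h -> revert_inv b n T h.
Proof. by case/andP. Qed.

Let g_inv h : inv h -> P h -> inv (g h).
Proof.
move=> inv_h P_h; have [inv_g sub_g] := loop_body_inv ab (revert_inv_of inv_h) (psi_nf inv_h P_h).
by rewrite inE inv_g.
Qed.

Let g_psi h : inv h -> P h -> chg a T (g h) = psi h.
Proof.
move=> inv_h P_h; have [inv_psi _] := revert_star_inv (exchangeable_sym ab)
  (revert_inv_chg_Em ab (revert_inv_of inv_h).1) (psi_nf inv_h P_h).1.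
have sub_T : T `<=` Em a (psi h) by rewrite (psi_nf inv_h P_h).2; case/andP: inv_h.
by case: (exch_chgab ab inv_psi sub_T).
Qed.

Let g_inj : {in [predI inv & P] &, injective g}.
Proof.
move=> h1 h2 /andP[inv_h1 P_h1] /andP[inv_h2 P_h2] eq_g.
have eq_psi : psi h1 = psi h2 by rewrite -g_psi // eq_g g_psi.
have [nf1 nf2] := (psi_nf inv_h1 P_h1, psi_nf inv_h2 P_h2).
have eq_S : Em b h1 = Em b h2 by rewrite -nf1.2 -nf2.2 eq_psi.
have inv2 : revert_inv b n (Em b h2) h2 by case/andP: inv_h2.
rewrite eq_S eq_psi in nf1.
apply: (revert_nf_unique ab (loop_body_inv ab inv2 nf2)).
- exact: (revert_nf_chg ab (revert_inv_of inv_h1).1 eq_S nf1).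
- exact: (revert_nf_chg ab (revert_inv_of inv_h2).1 erefl nf2).
Qed.

Let g_neq_start h : inv h -> P h -> g h != chg b T x.
Proof.
move=> inv_h P_h; have [_ Em_psi] := psi_nf inv_h P_h; have g_h := g_psi inv_h P_h.
apply: contraNneq P_h => eq_g; apply/eqP.
have sub_T : T `<=` Em a x by rewrite Em_x.
have [_ _ chg_xK] := exch_chgab ab inv_x sub_T.
by rewrite -Em_psi -g_h eq_g chg_xK.
Qed.

Lemma phiEq_total_of_psi : exists K z, phiEq a b K T x = Some z.
Proof.
pose h0 := chg b T x.
have inv_h0 : inv h0.
  have sub_T : T `<=` Em a x by rewrite Em_x.
  by have [inv_h0 sub_h0 _] := exch_chgab ab inv_x sub_T; rewrite inE inv_h0.
have inv_F : {subset inv <= bounded_seqs n n}.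
  by move=> h /andP[inv_h _]; apply: invseq_bounded inv_h.
have [i [P_lt notP_i]] := iter_exit inv_F g_inv g_inj g_neq_start inv_h0.
have loop d j : (j + d)%N = i -> exists K, phiLoop a b K T (iter j g h0) = Some (iter i g h0).
  elim: d j => [|d IH] j.
    by rewrite addn0 => ->; exists 1; rewrite phiLoopS; move: notP_i; rewrite negbK => ->.
  move=> eq_i; have [|K1 phi1] := IH j.+1; first by rewrite addSnnS.
  have P_j : P (iter j g h0) by apply: P_lt; lia.
  have inv_j : inv (iter j g h0) by apply: (iter_inv g_inv inv_h0) => k lt_kj; apply: P_lt; lia.
  have [K2 phi2] := psi_fuel inv_j P_j.
  exists (maxn K1 K2).+1; rewrite phiLoopS (negbTE P_j) psiEq_phiEq.
  by rewrite (phiEq_fuel (leq_maxr _ _) phi2); apply: phiLoop_fuel (leq_maxl _ _) phi1.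
have [K phi_h0] := loop i 0 (add0n i).
by exists K.+1, (iter i g h0); rewrite phiEqS.
Qed.

End Termination.

Lemma phiEq_total n a b T x : exchangeable a b -> invseq n x -> Em a x = T ->
  exists K z, phiEq a b K T x = Some z.
Proof.
elim/ltn_ind: (n - #|`T|) {-2}T (erefl (n - #|`T|)) a b x => m IH {}T card_T a b x ab inv_x Em_x.
apply: (phiEq_total_of_psi ab inv_x Em_x) => h inv_h lt_T.
apply: (IH _ _ _ erefl b a h (exchangeable_sym ab) inv_h erefl).
have := card_Em b h; have := fproper_ltn_card lt_T; rewrite (invseq_size inv_h); lia.
Qed.

Lemma procLoop_nf a b n T h : exchangeable a b -> revert_inv b n T h ->
  exists2 z, revert_nf a b T h z &
    forall k, revert_measure a b n h < k -> procLoop a b k T h = Some z.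
Proof.
move=> ab; elim/ltn_ind: (revert_measure a b n h) {-2}h (erefl (revert_measure a b n h)).
move=> m IH {}h mu_h inv_h; have sub_D : Em b h `\` T `<=` Em b h `\` T := fsubset_refl _.
have [D0 | D_ne0] := eqVneq (Em b h `\` T) fset0.
  exists h; first by split; [apply: star_refl | apply/eqP; rewrite eqEfsubset -fsetD_eq0 D0 eqxx inv_h.2].
  by case=> [//|k] _ /=; rewrite D0 eqxx.
have hD := revert_steps ab inv_h sub_D.
have lt_mu := revert_steps_measure ab inv_h sub_D D_ne0.
have [|z [Dz nf_z] proc_z] := IH _ _ _ erefl (revert_star_inv ab inv_h hD); first by rewrite -mu_h.
exists z; first by split=> //; apply: star_trans hD Dz.
case=> [//|k] lt_k /=; rewrite (negbTE D_ne0); apply: proc_z.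
by rewrite -ltnS in lt_k; apply: leq_trans lt_mu lt_k.
Qed.

Unset Implicit Arguments.

Theorem theorem2 (p q : seq nat) (d : nat)
  (* patterns of length 4 *)
  (Hsp : size p = 4) (Hsq : size q = 4)
  (* non-overlapping *)
  (Hnp : non_overlapping p) (Hnq : non_overlapping q)
  (* same first and last entries *)
  (Hfirst : nth 0 p 0 = nth 0 q 0) (Hlast : nth 0 p 3 = nth 0 q 3)
  (* same maximum entry d, every value of {0..d} occurs *)
  (Hdp : \max_(x <- p) x = d) (Hdq : \max_(x <- q) x = d)
  (Hallp : forall j, j <= d -> j \in p) (Hallq : forall j, j <= d -> j \in q)
  (* single changes on inversion sequences yield inversion sequences *)
  (Hchp : forall n e i, invseq n e -> i \in Em p e -> invseq n (chg q [fset i] e))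
  (Hchq : forall n e i, invseq n e -> i \in Em q e -> invseq n (chg p [fset i] e))
  (* phi_{>=T} : I_{n,p}(>=T) -> I_{n,q}(>=T) is a bijection with inverse
     phi^{-1}_{>=T} *)
  (Hphi : forall n (T : {fset nat}) e, invseq n e -> T `<=` Em p e ->
     [/\ invseq n (chg q T e), T `<=` Em q (chg q T e) & chg p T (chg q T e) = e])
  (Hphiinv : forall n (T : {fset nat}) h, invseq n h -> T `<=` Em q h ->
     [/\ invseq n (chg p T h), T `<=` Em p (chg p T h) & chg q T (chg p T h) = h])
  (n : nat) (e : seq nat) (He : invseq n e) :
  exists (k : nat) (x : seq nat),
    procedure p q k e = Some x /\ phiEq p q k (Em p e) e = Some x.
Proof.
set T := Em p e.
have [<- | neq_pq] := eqVneq p q.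
  have chg_e : chg p T e = e by apply: chg_id.
  by exists 2, e; rewrite /procedure -/T phiEqS chg_e /= /T fsetDv !eqxx.
have pq : exchangeable p q.
  split=> //; first by rewrite Hsp Hsq.
  - by move=> x xp; apply: Hallq; rewrite -Hdp; apply: leq_bigmax_seq.
  - by move=> x xq; apply: Hallp; rewrite -Hdq; apply: leq_bigmax_seq.
have inv0 : revert_inv q n T (chg q T e) by case: (Hphi n T e He (fsubset_refl _)).
have [z nf_z proc_z] := procLoop_nf pq inv0.
have [K [z' phi_z']] := phiEq_total pq He (erefl T).
have nf_z' := (phi_sound n K pq).2 _ _ _ He (fsubset_refl _) phi_z'.
rewrite (revert_nf_unique pq inv0 nf_z' nf_z) in phi_z'.
exists (maxn K (revert_measure p q n (chg q T e)).+1), z; split.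
  by apply: proc_z; rewrite leq_maxr.
exact: phiEq_fuel (leq_maxl _ _) phi_z'.
Qed.
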